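(* Let $X$ be a metric space and let $C(X)_K=\{f\in\mathbb{R}^X\colon \overline{D_f}\text{ is compact}\}$, where $D_f$ is the set of points of discontinuity of $f$. The following are equivalent: (1) $C(X)_K$ is closed under uniform limits (if a sequence in $C(X)_K$ converges uniformly on $X$ to $f\in\mathbb{R}^X$, then $f\in C(X)_K$); (2) the set of all non-isolated points of $X$ is compact; (3) $C(X)_K$ is isomorphic (as a ring) to $C(Y)$ for some topological space $Y$.
   Context: $C(Y)$ denotes the ring of all real-valued continuous functions on $Y$. *)

From HB Require Import structures.
From mathcomp Require Import all_boot all_order all_algebra.
From mathcomp Require Import all_classical all_reals all_analysis.
Unset Printing Implicit Defensive.
Import Order.TTheory GRing.Theory Num.Theory.
Import numFieldNormedType.Exports.
Local Open Scope classical_set_scope.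
Local Open Scope ring_scope.

Definition discont_pts {R : realType} {X : topologicalType} (f : X -> R) : set X :=
  [set x | ~ {for x, continuous f}].

Definition CXK {R : realType} (X : topologicalType) : set (X -> R) :=
  [set f | compact (closure (discont_pts f))].

Definition CY {R : realType} (Y : topologicalType) : set (Y -> R) :=
  [set f | continuous f].

Definition unif_cvg {R : realType} {X : Type} (u : nat -> X -> R) (f : X -> R) : Prop :=
  forall e : R, 0 < e -> exists N : nat, forall n, (N <= n)%N ->
    forall x, `|u n x - f x| < e.

Definition closed_unif_limits {R : realType} {X : Type} (A : set (X -> R)) : Prop :=
  forall (u : nat -> X -> R) (f : X -> R),
    (forall n, A (u n)) -> unif_cvg u f -> A f.

Definition nonisolated_pts (X : topologicalType) : set X :=
  [set x | ~ isolated setT x].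

Definition ring_isomorphic {R : realType} {X Y : Type}
    (A : set (X -> R)) (B : set (Y -> R)) : Prop :=
  exists phi : (X -> R) -> (Y -> R),
    [/\ set_bij A B phi,
        (forall f g, A f -> A g -> phi (f \+ g) = phi f \+ phi g),
        (forall f g, A f -> A g -> phi (f \* g) = phi f \* phi g) &
        phi (cst 1) = cst 1].

From HB Require Import structures.
From mathcomp Require Import all_boot all_order all_algebra.
From mathcomp Require Import all_classical all_reals all_analysis.
From mathcomp Require Import lra.
Import Order.TTheory GRing.Theory Num.Theory.
Import numFieldNormedType.Exports.
Local Open Scope classical_set_scope.
Local Open Scope ring_scope.

(* (2) -> (3): every discontinuity point is non-isolated, and the non-isolated
   points form a closed set; if it is compact, C(X)_K is all of R^X, which is
   C(Y) for the discrete topology Y on X.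
   (3) -> (1): in C(X)_K as in C(Y) the nonnegative functions are the squares,
   so a ring isomorphism preserves the order; it also fixes the constants
   1/(k+1), hence preserves the bounds |f - g| <= 1/(k+1) in both directions.
   It thus maps a uniformly convergent sequence of C(X)_K to a uniformly Cauchy
   sequence of C(Y), whose continuous limit pulls back to the limit of the
   original sequence.
   (1) -> (2): if the non-isolated points do not form a compact set, an
   ultrafilter on them without limit yields a sequence x of non-isolated
   points without cluster point: through balls of radius 1/(k+1) of the
   ultrafilter if it contains such balls, as an e-separated sequence
   otherwise. The function worth 2^-m at x_m is discontinuous at every x_n,
   so the closure of its discontinuity set is not compact; yet it is the
   uniform limit of its truncations, which are discontinuous only on finite
   sets. *)

Lemma nbhs_set1_continuous {T U : topologicalType} (f : T -> U) (x : T) :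
  nbhs x [set x] -> {for x, continuous f}.
Proof. by move=> x1 B /nbhs_singleton Bfx; apply: filterS x1 => _ ->. Qed.

Section DiscontinuityPoints.
Context {R : realType} {X : topologicalType}.
Implicit Types (f g h : X -> R) (S : set X).

Lemma CXK_discont_subset S f : closed S -> compact S ->
  discont_pts f `<=` S -> CXK X f.
Proof.
move=> clS cS Df; apply: (subclosed_compact _ cS); first exact: closed_closure.
exact: subset_trans (closureS Df) clS.
Qed.

Lemma discont_subU_CXK f g h :
  discont_pts h `<=` discont_pts f `|` discont_pts g ->
  CXK X f -> CXK X g -> CXK X h.
Proof.
move=> Dh cf cg.
apply: (CXK_discont_subset (closure (discont_pts f) `|` closure (discont_pts g))).
- by apply: closedU; exact: closed_closure.
- exact: compactU.
by move=> x /Dh [] Dx; [left|right]; exact: subset_closure.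
Qed.

Lemma discont_pts_support S f : closed S -> (forall x, ~ S x -> f x = 0) ->
  discont_pts f `<=` S.
Proof.
move=> clS f0 x; apply: contra_notP => Sx; apply: (@near_cst_continuous _ _ 0).
have : nbhs x (~` S) by apply: open_nbhs_nbhs; split => //; rewrite openC.
by apply: filterS => y /f0.
Qed.

Lemma CXK_cst (c : R) : CXK X (cst c).
Proof.
apply: (CXK_discont_subset _ _ closed0 compact0) => x; apply.
exact: cst_continuous.
Qed.

Lemma CXKD {f g} : CXK X f -> CXK X g -> CXK X (f \+ g).
Proof.
apply: discont_subU_CXK => x; apply: contra_notP => /not_orP[/contrapT cf /contrapT cg].
exact: cvgD.
Qed.

Lemma CXKM {f g} : CXK X f -> CXK X g -> CXK X (f \* g).
Proof.
apply: discont_subU_CXK => x; apply: contra_notP => /not_orP[/contrapT cf /contrapT cg].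
exact: cvgM.
Qed.

Lemma CXK_comp {k : R -> R} {f} : continuous k -> CXK X f -> CXK X (k \o f).
Proof.
move=> ck cf; apply: (discont_subU_CXK f f (k \o f) _ cf cf) => x.
by apply: contra_notP => /not_orP[/contrapT fx _]; exact: continuous_comp fx (ck _).
Qed.

Lemma CXKB {f g} : CXK X f -> CXK X g -> CXK X (f \- g).
Proof.
apply: discont_subU_CXK => x; apply: contra_notP => /not_orP[/contrapT cf /contrapT cg].
exact: cvgB.
Qed.

End DiscontinuityPoints.

Section CompactNonisolated.
Context {R : realType} {X : topologicalType}.

Lemma isolatedT_nbhs_set1 (x : X) : isolated setT x <-> nbhs x [set x].
Proof.
split=> [[_ [V Vx]]|x1]; first by rewrite setIT => <-.
by split; [exact: mem_set | exists [set x]; rewrite ?setIT].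
Qed.

Lemma nonisolatedN_nbhs (x : X) : ~ nonisolated_pts X x -> nbhs x [set x].
Proof. by move=> /contrapT/isolatedT_nbhs_set1. Qed.

Lemma nonisolated_closed : closed (nonisolated_pts X).
Proof.
move=> c clc; apply: contrapT => Lc.
have [z [Lz /= zc]] := clc _ (nonisolatedN_nbhs _ Lc).
by apply: Lc; rewrite -zc.
Qed.

Lemma discont_nonisolated (f : X -> R) : discont_pts f `<=` nonisolated_pts X.
Proof.
by move=> x Dx; apply: contrapT => /nonisolatedN_nbhs/(nbhs_set1_continuous f).
Qed.

Lemma compact_nonisolated_CXK : compact (nonisolated_pts X) ->
  forall f : X -> R, CXK X f.
Proof.
move=> cL f; apply: (CXK_discont_subset _ _ nonisolated_closed cL).
exact: discont_nonisolated.
Qed.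

Lemma compact_nonisolated_ring_isomorphic : compact (nonisolated_pts X) ->
  ring_isomorphic (@CXK R X) (@CY R (discrete_topology X)).
Proof.
move=> cL; exists id; split => //; split => // [f _ x|f _].
- exact/nbhs_set1_continuous/discrete_set1.
- by exists f => //; exact: compact_nonisolated_CXK.
Qed.

End CompactNonisolated.

Lemma exists_inv_succ_lt {R : realType} {e : R} :
  0 < e -> exists k : nat, k.+1%:R^-1 < e.
Proof.
move=> e0; have [N _ /(_ N (leqnn N))] := near_infty_natSinv_lt (PosNum e0).
by exists N.
Qed.

(* Stated along the tolerances [1/(k+1)]: these are the constants a ring
   isomorphism is shown to fix, so it transports this form of the condition. *)
Definition unif_cauchy {R : realType} {T : Type} (v : nat -> T -> R) : Prop :=
  forall k, exists N, forall m n, (N <= m)%N -> (N <= n)%N ->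
    forall t, `|v m t - v n t| <= k.+1%:R^-1.

Section UniformConvergence.
Context {R : realType} {T : Type}.
Implicit Types (u v : nat -> T -> R) (f g : T -> R).

Lemma unif_cvgP u f : unif_cvg u f <->
  forall k, exists N, forall n, (N <= n)%N -> forall t, `|u n t - f t| <= k.+1%:R^-1.
Proof.
split=> [uf k|uf e e0].
  have [|N uN] := uf k.+1%:R^-1; first by rewrite invr_gt0.
  by exists N => n Nn t; exact/ltW/uN.
have [k ke] := exists_inv_succ_lt e0; have [N uN] := uf k.
by exists N => n Nn t; exact: le_lt_trans (uN n Nn t) ke.
Qed.

Lemma unif_cvg_cauchy {u f} : unif_cvg u f -> unif_cauchy u.
Proof.
move=> uf k; have [|N uN] := uf (k.+1%:R^-1 / 2); first by rewrite divr_gt0.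
exists N => m n Nm Nn t; apply: le_trans (ler_distD (f t) _ _) _.
by rewrite [leRHS](splitr k.+1%:R^-1) (distrC (f t)) lerD // ltW // uN.
Qed.

Lemma unif_cauchy_cvg {v} : unif_cauchy v -> exists g, unif_cvg v g.
Proof.
move=> cv; have cvt t : cvg (v ^~ t @ \oo).
  apply: cauchy_cvg; apply: cauchy_exP => e e0.
  have [k ke] := exists_inv_succ_lt e0; have [N vN] := cv k.
  exists (v N t), N => // n /= Nn; rewrite -ball_normE /=.
  exact: le_lt_trans (vN N n (leqnn N) Nn t) ke.
exists (fun t => lim (v ^~ t @ \oo)); apply/unif_cvgP => k.
have [N vN] := cv k; exists N => n Nn t; rewrite ler_distlC.
apply/andP; split; [apply: limr_ge | apply: limr_le] => //; exists N => // m /= Nm.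
all: by have := vN n m Nn Nm t; rewrite ler_distlC => /andP[].
Qed.

Lemma unif_cvg_pointwise {u f} : unif_cvg u f -> forall t, u ^~ t @ \oo --> f t.
Proof.
move=> uf t; apply/cvgrPdist_lt => e e0; have [N uN] := uf e e0.
by exists N => // n /= Nn; rewrite distrC; exact: uN.
Qed.

Lemma unif_cvg_unique {u f g} : unif_cvg u f -> unif_cvg u g -> f = g.
Proof.
move=> uf ug; apply/funext => t.
exact: (cvg_unique (@Rhausdorff R) (unif_cvg_pointwise uf t) (unif_cvg_pointwise ug t)).
Qed.

End UniformConvergence.

Lemma unif_cvg_continuous {R : realType} {T : topologicalType}
    (v : nat -> T -> R) (g : T -> R) :
  (forall n, continuous (v n)) -> unif_cvg v g -> continuous g.
Proof.
move=> cv vg; apply: (@uniform_limit_continuous _ _ (v @ \oo)).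
  by exists 0%N => // n _; exact: cv.
move=> P /uniform_nbhs[E [+ EP]]; rewrite -entourage_ballE => -[e /= e0 eE].
have [N vN] := vg e e0; exists N => // n /= Nn; apply: EP => t _; apply: eE.
by rewrite /= -ball_normE /= distrC; exact: vN.
Qed.

Section RingIsomorphism.
Context {R : realType} {X Y : topologicalType} (phi : (X -> R) -> (Y -> R)).
Hypotheses (phi_bij : set_bij (@CXK R X) (@CY R Y) phi)
  (phiD : forall {f g}, CXK X f -> CXK X g -> phi (f \+ g) = phi f \+ phi g)
  (phiM : forall {f g}, CXK X f -> CXK X g -> phi (f \* g) = phi f \* phi g)
  (phi1 : phi (cst 1) = cst 1).
Implicit Types f g h : X -> R.

Lemma phi_continuous {f} : CXK X f -> continuous (phi f).
Proof. by have [phi_fun _ _] := phi_bij; exact: phi_fun. Qed.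

Lemma phiB {f g} : CXK X f -> CXK X g -> phi (f \- g) = phi f \- phi g.
Proof.
move=> cf cg; have := phiD (CXKB cf cg) cg.
have -> : (f \- g) \+ g = f by apply/funext => x /=; rewrite subrK.
by move->; apply/funext => y /=; rewrite addrK.
Qed.

Lemma phi_cst_nat n : phi (cst n%:R) = cst n%:R.
Proof.
elim: n => [|n IH].
  have := phiB (CXK_cst 1) (CXK_cst 1); rewrite phi1.
  have -> : cst 1 \- cst 1 = cst 0 :> (X -> R) by apply/funext => x /=; rewrite subrr.
  by move->; apply/funext => y /=; rewrite subrr.
have := phiD (CXK_cst n%:R) (CXK_cst 1); rewrite IH phi1.
have -> : cst n%:R \+ cst 1 = cst n.+1%:R :> (X -> R).
  by apply/funext => x /=; rewrite natr1.
by move->; apply/funext => y /=; rewrite natr1.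
Qed.

Lemma phi_cstV (c : R) : c != 0 -> phi (cst c) = cst c -> phi (cst c^-1) = cst c^-1.
Proof.
move=> c0 phic; have := phiM (CXK_cst c^-1) (CXK_cst c).
have -> : cst c^-1 \* cst c = cst 1 :> (X -> R) by apply/funext => x /=; rewrite mulVf.
rewrite phi1 phic => E; apply/funext => y; apply: (mulIf c0).
by have /= := congr1 (@^~ y) E; rewrite mulVf // => <-.
Qed.

Lemma phi_cst_inv_succ k : phi (cst k.+1%:R^-1) = cst k.+1%:R^-1.
Proof. by apply: phi_cstV; [rewrite pnatr_eq0 | exact: phi_cst_nat]. Qed.

Lemma phi_ge0 h : CXK X h -> (forall x, 0 <= h x) <-> (forall y, 0 <= phi h y).
Proof.
move=> ch; have [_ phi_inj phi_surj] := phi_bij.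
have sqrtK (T : Type) (k : T -> R) : (forall t, 0 <= k t) ->
    (Num.sqrt \o k) \* (Num.sqrt \o k) = k.
  by move=> k0; apply/funext => t /=; rewrite -expr2 sqr_sqrtr.
split=> [h0 y|phih0 x].
- have cs : CXK X (Num.sqrt \o h) by exact: CXK_comp (@sqrt_continuous R) ch.
  by rewrite -(sqrtK _ _ h0) phiM //= -expr2 sqr_ge0.
- have Csqrt : CY Y (Num.sqrt \o phi h).
    move=> y; apply: continuous_comp; first exact: phi_continuous.
    exact: sqrt_continuous.
  have [s cs phis] := phi_surj _ Csqrt.
  have <- : s \* s = h.
    apply: phi_inj; rewrite ?inE //; first exact: CXKM.
    by rewrite phiM // phis sqrtK.
  by rewrite /= -expr2 sqr_ge0.
Qed.

Lemma phi_dist_le k a b : CXK X a -> CXK X b ->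
  (forall x, `|a x - b x| <= k.+1%:R^-1) <->
  (forall y, `|phi a y - phi b y| <= k.+1%:R^-1).
Proof.
move=> ca cb; set e : R := k.+1%:R^-1.
have dist_le (T : Type) (c d : T -> R) : (forall t, `|c t - d t| <= e) <->
    (forall t, 0 <= (cst e \+ (c \- d)) t) /\ (forall t, 0 <= (cst e \+ (d \- c)) t).
  split=> [cd|[cd dc] t]; first by split=> t /=; have := cd t; rewrite ler_norml; lra.
  by have := cd t; have := dc t; rewrite ler_norml /=; lra.
have phi_shift_ge0 c d : CXK X c -> CXK X d ->
    (forall x, 0 <= (cst e \+ (c \- d)) x) <->
    (forall y, 0 <= (cst e \+ (phi c \- phi d)) y).
  move=> cc cd; rewrite -phiB // -phi_cst_inv_succ -phiD; [|exact: CXK_cst|exact: CXKB].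
  exact/phi_ge0/(CXKD (CXK_cst _) (CXKB cc cd)).
by split=> /dist_le[H1 H2]; apply/dist_le; split; apply/phi_shift_ge0.
Qed.

Lemma iso_CY_closed_unif_limits : closed_unif_limits (@CXK R X).
Proof.
move=> u f cu uf; have [_ _ phi_surj] := phi_bij.
have [w vw] : exists w : Y -> R, unif_cvg (phi \o u) w.
  apply: unif_cauchy_cvg => k; have [N uN] := unif_cvg_cauchy uf k.
  by exists N => m n Nm Nn; apply/phi_dist_le; [exact: cu | exact: cu | exact: uN].
have Cw : CY Y w by apply: unif_cvg_continuous vw => n; exact: phi_continuous.
have [h ch phih] := phi_surj _ Cw.
suff uh : unif_cvg u h by rewrite (unif_cvg_unique uf uh).
apply/unif_cvgP => k; have [N vN] := (unif_cvgP _ _).1 vw k.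
by exists N => n Nn; apply/phi_dist_le => //; rewrite phih; exact: vN.
Qed.

End RingIsomorphism.

Lemma dependent_choice_seq {T : Type} (P : seq T -> T -> Prop) :
  (forall s, exists t, P s t) -> exists x : nat -> T, forall n, P (mkseq x n) (x n).
Proof.
move=> /choice[g gP].
pose fix prefix n := if n is n'.+1 then rcons (prefix n') (g (prefix n')) else [::].
exists (fun n => g (prefix n)) => n.
suff -> : mkseq (fun i => g (prefix i)) n = prefix n by exact: gP.
by elim: n => //= n IH; rewrite mkseqS IH.
Qed.

Section MetricSequences.
Context {R : realType} {X : metricType R}.
Implicit Types (x : nat -> X) (L : set X) (G : set_system X).

Lemma cluster_seq_ball {x c} : cluster (x @ \oo) c ->
  forall e : R, 0 < e -> forall N, exists2 n, (N <= n)%N & ball c e (x n).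
Proof.
move=> xc e e0 N; have ce := nbhsx_ballx c _ e0.
have [|_ [[n Nn <-] cxn]] := xc (x @` [set n | (N <= n)%N]) _ _ ce.
  by exists N => // n /= Nn; exists n.
by exists n.
Qed.

Lemma separated_seq_no_cluster {x} {e : R} : 0 < e ->
  (forall m n, (m < n)%N -> ~ ball (x m) e (x n)) -> forall c, ~ cluster (x @ \oo) c.
Proof.
move=> e0 sep c xc; have e20 : 0 < e / 2 by rewrite divr_gt0.
have [m _ cxm] := cluster_seq_ball xc _ e20 0.
have [n mn cxn] := cluster_seq_ball xc _ e20 m.+1.
by apply: (sep m n mn); rewrite [e](splitr e); exact: ball_triangle (ball_sym cxm) cxn.
Qed.

Lemma small_balls_seq {G L} : ProperFilter G -> G L ->
  (forall e : R, 0 < e -> exists p, G (ball p e)) ->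
  exists x, (forall n, L (x n)) /\ forall c, cluster (x @ \oo) c -> G --> c.
Proof.
move=> PG GL small.
have /choice[p Gp] k : exists p, G (ball p k.+1%:R^-1).
  by apply: small; rewrite invr_gt0.
have /choice[x xp] k : exists z, (L `&` ball (p k) k.+1%:R^-1) z.
  exact: filter_ex (filterI GL (Gp k)).
exists x; split=> [n|c xc]; first by have [] := xp n.
apply/fcvg_ballP => e e0; have [|k ke] := @exists_inv_succ_lt R (e / 4).
  by rewrite divr_gt0.
have [|n kn cxn] := cluster_seq_ball xc (e / 2) _ k; first by rewrite divr_gt0.
(* [ball (p n) r] is in [G], and within [e/2 + 2r < e] of [c] as [r < e/4]. *)
apply: filterS (Gp n) => y pny; have [_ pnxn] := xp n.
have nk : n.+1%:R^-1 <= k.+1%:R^-1 :> R by rewrite lef_pV2 ?posrE // ler_nat ltnS.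
apply: (le_ball _ (ball_triangle (ball_triangle cxn (ball_sym pnxn)) pny)).
by move: nk ke; move: n.+1%:R^-1 k.+1%:R^-1 => rn rk; lra.
Qed.

Lemma ultra_far_seq {G L} {e : R} : UltraFilter G -> G L -> 0 < e ->
  (forall p, ~ G (ball p e)) ->
  exists x, (forall n, L (x n)) /\ forall m n, (m < n)%N -> ~ ball (x m) e (x n).
Proof.
move=> UG GL e0 far.
have Gfar p : G (~` ball p e) by have [/far|] := in_ultra_setVsetC (ball p e) UG.
have [|x xP] := @dependent_choice_seq _
  (fun s z => L z /\ forall q, q \in s -> ~ ball q e z).
  move=> s; apply: (@filter_ex _ G); elim: s => [|q s IH].
    by apply: filterS GL.
  apply: filterS (filterI IH (Gfar q)) => z [[Lz sz] qz]; split=> // q'.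
  by rewrite in_cons => /orP[/eqP -> //|]; exact: sz.
exists x; split=> [n|m n mn]; first by have [] := xP n.
by have [_] := xP n; apply; rewrite /mkseq map_f // mem_iota.
Qed.

Lemma closed_not_compact_seq L : closed L -> ~ compact L ->
  exists x, (forall n, L (x n)) /\ forall c, ~ cluster (x @ \oo) c.
Proof.
move=> clL ncL.
have [G [UG GL Gnc]] : exists G : set_system X,
    [/\ UltraFilter G, G L & forall c : X, ~ G --> c].
  apply: contrapT => nG; apply: ncL; rewrite compact_ultra => G UG GL.
  apply: contrapT => nlim; apply: nG; exists G; split=> // c Gc.
  apply: nlim; exists c; split=> //; apply: clL => B /Gc GB.
  exact: filter_ex (filterI GL GB).
have [small|] := pselect (forall e : R, 0 < e -> exists p, G (ball p e)).
  have [x [Lx xc]] := small_balls_seq _ GL small.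
  by exists x; split=> // c /xc; exact: Gnc.
move=> /existsNP[e /not_implyP[e0 /forallNP far]].
have [x [Lx sep]] := ultra_far_seq UG GL e0 far.
by exists x; split=> //; exact: separated_seq_no_cluster e0 sep.
Qed.

End MetricSequences.

Lemma expr_half_gap {R : realType} {m n : nat} : m != n ->
  (2^-1 : R) ^+ m / 2 <= `|2^-1 ^+ n - 2^-1 ^+ m|.
Proof.
have [half_ge0 half_le1] : (0 : R) <= 2^-1 /\ (2^-1 : R) <= 1 by split; lra.
have halves (i j : nat) : (i < j)%N -> (2^-1 : R) ^+ j <= 2^-1 ^+ i / 2.
  by move=> ij; rewrite -exprSr; exact: ler_wiXn2l.
have wm : (0 : R) < 2^-1 ^+ m by apply: exprn_gt0; lra.
have wn : (0 : R) < 2^-1 ^+ n by apply: exprn_gt0; lra.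
case: ltngtP => // [mn|nm] _.
- by have := halves _ _ mn => h; rewrite ler_normr; apply/orP; right; lra.
- by have := halves _ _ nm => h; rewrite ler_normr; apply/orP; left; lra.
Qed.

Section IndexWeight.
Context {R : realType} {X : topologicalType} (x : nat -> X).

Definition first_index (y : X) : option nat :=
  if pselect (exists n, x n == y) is left ex then Some (ex_minn ex) else None.

Lemma first_indexP {y m} : first_index y = Some m -> x m = y.
Proof.
by rewrite /first_index; case: pselect => // ex [<-]; case: ex_minnP => i /eqP.
Qed.

Lemma first_index_le n : exists2 m, first_index (x n) = Some m & (m <= n)%N.
Proof.
rewrite /first_index; case: pselect => [ex|[]]; last by exists n.
by exists (ex_minn ex) => //; case: ex_minnP => i _; apply.
Qed.

(* Weighting by the first occurrence keeps this well defined when [x] repeats. *)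
Definition index_weight (P : pred nat) (y : X) : R :=
  if first_index y is Some m then (if P m then 2^-1 ^+ m else 0) else 0.

Lemma index_weight_trunc_CXK N : hausdorff_space X ->
  CXK X (index_weight (fun m => (m <= N)%N)).
Proof.
move=> hX; have cS : compact (x @` `I_N.+1) by apply/finite_compact/finite_image.
apply: (CXK_discont_subset _ _ (compact_closed hX cS) cS).
apply: discont_pts_support; first exact: compact_closed hX cS.
move=> y Sy; rewrite /index_weight; case yE: first_index => [m|] //.
by case: ifPn => // mN; case: Sy; exists m; [rewrite /= ltnS | exact: first_indexP].
Qed.

Lemma index_weight_unif_cvg :
  unif_cvg (fun N => index_weight (fun m => (m <= N)%N)) (index_weight predT).
Proof.
move=> e e0; have half : `|(2^-1 : R)| < 1 by rewrite ger0_norm; lra.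
have [N _ wN] := (cvgrPdist_lt _ _).1 (cvg_expr half) e e0.
exists N => n Nn y; rewrite /index_weight; case: first_index => [m|]; last first.
  by rewrite subrr normr0.
case: leqP => /= [_|nm]; first by rewrite subrr normr0.
by apply: wN; exact: leq_trans (ltnW nm).
Qed.

Lemma index_weight_discont n : nonisolated_pts X (x n) ->
  discont_pts (index_weight predT) (x n).
Proof.
move=> Lxn cf; have [m xnm _] := first_index_le n; set w : R := 2^-1 ^+ m.
have w0 : 0 < w by apply: exprn_gt0; lra.
have fxn : index_weight predT (x n) = w by rewrite /index_weight xnm.
apply: Lxn; apply/isolatedT_nbhs_set1.
have /(cvgrPdist_lt _ _).1/(_ (w / 2)) := cf; rewrite fxn divr_gt0 // => /(_ isT).
apply: filterS => y; rewrite /index_weight; case yE: first_index => [i|] /=; last first.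
  by rewrite subr0 (gtr0_norm w0) => ww; exfalso; clear -w0 ww; lra.
have [im|im] := eqVneq i m.
  by move=> _; rewrite /= -(first_indexP yE) im (first_indexP xnm).
rewrite eq_sym in im; have := @expr_half_gap R _ _ im; rewrite -/w distrC => gap close.
by exfalso; clear -gap close; lra.
Qed.

Lemma no_cluster_not_closed_unif_limits : hausdorff_space X ->
  (forall n, nonisolated_pts X (x n)) -> (forall c, ~ cluster (x @ \oo) c) ->
  ~ closed_unif_limits (@CXK R X).
Proof.
move=> hX Lx noc cl.
have cf := cl _ _ (fun N => index_weight_trunc_CXK N hX) index_weight_unif_cvg.
have [|c [_ xc]] := cf (x @ \oo) _.
  by exists 0%N => // n _; apply: subset_closure; exact: index_weight_discont.
exact: noc xc.
Qed.

End IndexWeight.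

Lemma closed_unif_limits_compact_nonisolated {R : realType} {X : metricType R} :
  closed_unif_limits (@CXK R X) -> compact (nonisolated_pts X).
Proof.
move=> cl; apply: contrapT => ncL.
have [x [Lx noc]] := closed_not_compact_seq _ nonisolated_closed ncL.
exact: no_cluster_not_closed_unif_limits (@metric_hausdorff R X) Lx noc cl.
Qed.

Theorem corollary3p4 (R : realType) (X : metricType R) :
  [<-> closed_unif_limits (@CXK R X);
       compact (@nonisolated_pts X);
       exists Y : topologicalType, ring_isomorphic (@CXK R X) (@CY R Y)].
Proof.
tfae.
- exact: closed_unif_limits_compact_nonisolated.
- move=> cL; exists (discrete_topology X).
  exact: compact_nonisolated_ring_isomorphic.
- move=> [Y [phi [phi_bij phiD phiM phi1]]].
  exact: iso_CY_closed_unif_limits phi_bij phiD phiM phi1.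
Qed.
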